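(* For every partition $\mu$ of $n$, the set of monomials $\mathcal{A}(\mu)$ coincides with the Garsia–Procesi basis $\mathcal{B}(\mu)$.
   Context: A partition $\mu$ of $n$ is drawn as a Young diagram with left-justified rows, row lengths weakly decreasing top to bottom. A row-strict filling of $\mu$ places $1,\dots,n$ bijectively in the boxes with entries increasing left to right along rows. Dimension pairs (with $h(j)=j$): $(a,b)$ is a dimension pair of $T$ if $b>a$; $b$ lies in the same column as $a$ strictly below it, or in a column strictly left of $a$'s; and if the box immediately right of $a$ exists and contains $c$, then $b\le c$. $\Phi(T)=\prod_{j=2}^n x_j^{|D^T_j|}$ where $D^T_j$ is the set of dimension pairs $(a,j)$; $\mathcal{A}(\mu)=\{\Phi(T):T$ row-strict filling of $\mu\}$. Dimension-ordering of a diagram with $r$ nonzero rows: label the far-right boxes of the nonzero rows $1,\dots,r$, ordering them by column from rightmost to leftmost and within a column top to bottom. GP-tree of $\mu$: Level $n$ consists of $\mu$. A Young diagram $\nu$ at Level $i$ with $r$ nonzero rows has $r$ children at Level $i-1$ via edges labelled $x_i^0,\dots,x_i^{r-1}$ (left to right); the child along $x_i^j$ is obtained from $\nu$ by removing the box with dimension-order label $j+1$ and then, if this leaves a gap in that box's column, pushing the boxes of that column below the gap up by one so the result is again a Young diagram. Level 1 vertices (single boxes) are labelled by the product of the edge labels on the path from the root. $\mathcal{B}(\mu)$ is the set of these Level 1 monomials (the Garsia–Procesi monomial basis of $\mathbb{Q}[x_1,\dots,x_n]/I_\mu$, $I_\mu$ the Tanisaki ideal). *)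

From mathcomp Require Import all_boot.
Set Implicit Arguments. Unset Strict Implicit. Unset Printing Implicit Defensive.

Definition is_partition (n : nat) (mu : seq nat) : bool :=
  [&& sorted geq mu, all (fun l => 0 < l) mu & sumn mu == n].

Definition entry (T : seq (seq nat)) (r c : nat) : nat := nth 0 (nth [::] T r) c.

Definition row_strict_filling (mu : seq nat) (T : seq (seq nat)) : bool :=
  [&& shape T == mu, perm_eq (flatten T) (iota 1 (sumn mu)) & all (sorted ltn) T].

Definition boxes (T : seq (seq nat)) : seq (nat * nat) :=
  [seq (r, c) | r <- iota 0 (size T), c <- iota 0 (size (nth [::] T r))].

Definition dim_pair (T : seq (seq nat)) (p q : nat * nat) : bool :=
  let: (r, c) := p in let: (r', c') := q in
  let a := entry T r c in let b := entry T r' c' in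
  [&& a < b,
      ((c' == c) && (r < r')) || (c' < c)
    & (c.+1 < size (nth [::] T r)) ==> (b <= entry T r c.+1)].

Definition Dsize (T : seq (seq nat)) (j : nat) : nat :=
  count (fun pq : (nat * nat) * (nat * nat) =>
           (entry T pq.2.1 pq.2.2 == j) && dim_pair T pq.1 pq.2)
        [seq (p, q) | p <- boxes T, q <- boxes T].

(* Monomials in x_1..x_n are represented by exponent vectors [e_1; ...; e_n].
   Phi(T) = prod_{j=2}^n x_j^{|D_j|}. *)
Definition Phi (T : seq (seq nat)) : seq nat :=
  mkseq (fun i => if i == 0 then 0 else Dsize T i.+1) (sumn (shape T)).

Definition A_set (mu : seq nat) (e : seq nat) : Prop :=
  exists T, row_strict_filling mu T /\ Phi T = e.

Definition nz_rows (nu : seq nat) : seq nat :=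
  [seq r <- iota 0 (size nu) | 0 < nth 0 nu r].

Definition far_col (nu : seq nat) (r : nat) : nat := (nth 0 nu r).-1.

Definition dim_le (nu : seq nat) (r1 r2 : nat) : bool :=
  (far_col nu r2 < far_col nu r1) || ((far_col nu r1 == far_col nu r2) && (r1 <= r2)).

(* the rows of the far-right boxes listed in dimension order:
   the box with label j+1 is the far-right box of row nth 0 (dim_order nu) j *)
Definition dim_order (nu : seq nat) : seq nat := sort (dim_le nu) (nz_rows nu).

Definition col_height (nu : seq nat) (c : nat) : nat := count (fun l => c < l) nu.

(* Remove the far-right box of row r (in column c), then push the boxes of
   column c below the gap up by one: column c loses one box, the other columns
   are unchanged; the row lengths are read off the column heights. *)
Definition remove_push (nu : seq nat) (r : nat) : seq nat :=
  let c := far_col nu r in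
  let h c' := col_height nu c' - (c' == c) in
  mkseq (fun r' => count (fun c' => r' < h c') (iota 0 (head 0 nu))) (size nu).

Definition gp_child (nu : seq nat) (j : nat) : seq nat :=
  remove_push nu (nth 0 (dim_order nu) j).

(* gp_paths k nu : for nu at Level k+1, the list of exponent vectors
   [e_2; ...; e_{k+1}] of the products of edge labels along paths to Level 1. *)
Fixpoint gp_paths (k : nat) (nu : seq nat) : seq (seq nat) :=
  match k with
  | 0 => [:: [::]]
  | k'.+1 =>
      flatten [seq [seq rcons e j | e <- gp_paths k' (gp_child nu j)]
              | j <- iota 0 (size (nz_rows nu))]
  end.

(* B(mu): Level-1 monomials, as exponent vectors [e_1; ...; e_n] (e_1 = 0). *)
Definition B_set (mu : seq nat) : seq (seq nat) :=
  [seq 0 :: e | e <- gp_paths (sumn mu).-1 mu].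

From mathcomp Require Import all_boot zify.
Set Implicit Arguments. Unset Strict Implicit. Unset Printing Implicit Defensive.

(* Both sets obey the same recursion on the number of boxes, for row lengths given by an
   arbitrary composition s.  In a row-strict filling the entry n ends some row r, and its
   dimension pairs (a, n) are the far-right boxes preceding that of row r in the dimension
   order; deleting it leaves a filling of s with row r shortened.  Hence A(s) is the union
   over the nonzero rows r of A(s - e_r) x_n^(l_r - 1), l_r the dimension-order label of
   row r.  Exchanging two adjacent rows of different lengths preserves all labels, hence,
   by induction, A(s); so A(s - e_r) is the same for all rows r of a block of equal rows,
   in particular for its bottom row, which gives the child of s in the GP-tree. *)

Lemma sum_nat_of_bool (I : Type) (s : seq I) (P : pred I) :
  \sum_(i <- s) (P i : nat) = count P s.
Proof. by rewrite -sum1_count [RHS]big_mkcond. Qed.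

Lemma sum_iota_last k (P : pred nat) :
  \sum_(c <- iota 0 k) ((c.+1 == k) && P c : nat) = (0 < k) && P k.-1.
Proof.
case: k => [|k]; first by rewrite big_nil.
rewrite -[in iota _ _]addn1 iotaD big_cat big_seq1 /= eqxx add0n big1_seq ?add0n // => c.
by rewrite mem_iota => /andP[_ lt_ck]; rewrite eqSS ltn_eqF.
Qed.

Lemma count_iota_lt a H : a <= H -> count (fun c => c < a) (iota 0 H) = a.
Proof. by move=> le_aH; rewrite -size_filter (filter_iota_ltn 0 le_aH) size_iota. Qed.

Lemma count_iota_update (P : pred nat) c b H : c < H ->
  count (fun c' => if c' == c then b else P c') (iota 0 H) + P c =
  count P (iota 0 H) + b.
Proof.
move=> lt_cH.
have -> : iota 0 H = iota 0 c ++ c :: iota c.+1 (H - c.+1).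
  by rewrite -{1}(subnKC (ltnW lt_cH)) iotaD -subnSK.
have off_c s : c \notin s ->
    count (fun c' => if c' == c then b else P c') s = count P s.
  by move=> c_s; apply: eq_in_count => c' s_c'; case: eqP s_c' c_s => // -> ->.
rewrite !count_cat /= eqxx !off_c ?mem_iota ?ltnn ?ltnNge ?leqnSn //; lia.
Qed.

Lemma all_set_nth (X : Type) (P : pred X) x0 s r y :
  r < size s -> all P s -> P y -> all P (set_nth x0 s r y).
Proof.
elim: s r => [|a s IH] [|r] //= lt_r /andP[Pa Ps] Py; first by rewrite Py.
by rewrite Pa IH.
Qed.

Lemma set_nth_id (X : Type) x0 (s : seq X) r :
  r < size s -> set_nth x0 s r (nth x0 s r) = s.
Proof. by elim: s r => [|a s IH] [|r] //= lt_r; rewrite IH. Qed.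

Lemma sorted_rcons_ltn (s : seq nat) x :
  sorted ltn (rcons s x) = sorted ltn s && all (fun y => y < x) s.
Proof.
rewrite !(sorted_pairwise ltn_trans) -cats1 pairwise_cat /= andbT andbC.
by rewrite allrel1r.
Qed.

Lemma perm_cat_cons (X : eqType) (s1 s2 : seq X) x :
  perm_eq (s1 ++ x :: s2) (x :: s1 ++ s2).
Proof. by rewrite -cat1s perm_catCA. Qed.

Lemma perm_iotaS m : perm_eq (iota 1 m.+1) (m.+1 :: iota 1 m).
Proof. by rewrite -[m.+1]addn1 iotaD add1n addn1 perm_catC. Qed.

Lemma nth_pos_size (s : seq nat) r : 0 < nth 0 s r -> r < size s.
Proof. by apply: contraTT; rewrite -leqNgt => /(nth_default 0) ->. Qed.

Lemma leq_nth_sumn (s : seq nat) r : nth 0 s r <= sumn s.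
Proof.
by elim: s r => [|a s IH] [|r] //=; rewrite ?leq_addr // (leq_trans (IH r)) ?leq_addl.
Qed.

Lemma sumn_nth_pos (s : seq nat) r : 0 < nth 0 s r -> exists m, sumn s = m.+1.
Proof.
by move=> pos_r; exists (sumn s).-1; rewrite prednK // (leq_trans pos_r) ?leq_nth_sumn.
Qed.

Lemma sorted_geq_nth (s : seq nat) i j :
  sorted geq s -> i <= j -> nth 0 s j <= nth 0 s i.
Proof.
move=> s_geq le_ij; case: (ltnP j (size s)) => [lt_j|]; last by move/(nth_default 0) ->.
apply: (sorted_leq_nth (rev_trans leq_trans) leqnn 0 s_geq) => //.
exact: leq_ltn_trans lt_j.
Qed.

Definition decr_nth (s : seq nat) r := set_nth 0 s r (nth 0 s r).-1.

Lemma nth_decr_nth s r k : nth 0 (decr_nth s r) k = nth 0 s k - (k == r).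
Proof. by rewrite nth_set_nth /=; case: eqP => [->|_]; rewrite ?subn1 ?subn0. Qed.

Lemma size_decr_nth s r : r < size s -> size (decr_nth s r) = size s.
Proof. by move=> lt_r; rewrite size_set_nth; apply/maxn_idPr. Qed.

Lemma sumn_decr_nth s r : 0 < nth 0 s r -> sumn (decr_nth s r) = (sumn s).-1.
Proof. by move=> pos_r; rewrite sumn_set_nth0; lia. Qed.

Lemma decr_nthK s r : 0 < nth 0 s r -> incr_nth (decr_nth s r) r = s.
Proof.
move=> pos_r; have lt_r := nth_pos_size pos_r.
apply: (@eq_from_nth _ 0) => [|k _].
  by rewrite size_incr_nth size_decr_nth // lt_r.
by rewrite nth_incr_nth nth_decr_nth eq_sym; case: eqP => [->|]; lia.
Qed.

Lemma incr_nthK s r : r < size s -> decr_nth (incr_nth s r) r = s.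
Proof.
move=> lt_r; apply: (@eq_from_nth _ 0) => [|k _].
  by rewrite size_decr_nth size_incr_nth lt_r.
by rewrite nth_decr_nth nth_incr_nth eq_sym; case: eqP; lia.
Qed.

(** * Appending the largest entry to a row *)

(* The dimension-order label of the far-right box of row r, minus one. *)
Definition dim_rank (s : seq nat) r :=
  count (fun k => (k != r) && dim_le s k r) (nz_rows s).

Definition rcons_nth (T : seq (seq nat)) r x := set_nth [::] T r (rcons (nth [::] T r) x).

Lemma size_rcons_nth T r x : r < size T -> size (rcons_nth T r x) = size T.
Proof. by move=> lt_r; rewrite size_set_nth; apply/maxn_idPr. Qed.

Lemma nth_rcons_nth T r x k : nth [::] (rcons_nth T r x) k =
  if k == r then rcons (nth [::] T r) x else nth [::] T k.
Proof. by rewrite nth_set_nth. Qed.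

Lemma nth_shape (T : seq (seq nat)) k : nth 0 (shape T) k = size (nth [::] T k).
Proof.
case: (ltnP k (size T)) => lt_k; first by rewrite (nth_map [::]).
by rewrite !nth_default ?size_map.
Qed.

Lemma shape_rcons_nth T r x : r < size T ->
  shape (rcons_nth T r x) = incr_nth (shape T) r.
Proof.
move=> lt_r; apply: (@eq_from_nth _ 0) => [|k _].
  by rewrite size_incr_nth !size_map size_rcons_nth // lt_r.
rewrite nth_shape nth_rcons_nth nth_incr_nth nth_shape eq_sym.
by case: eqP => [->|]; rewrite ?size_rcons.
Qed.

Lemma perm_flatten_rcons_nth T r x : r < size T ->
  perm_eq (flatten (rcons_nth T r x)) (x :: flatten T).
Proof.
rewrite /rcons_nth; elim: T r => [|row T IH] [|r] //= lt_r.
  by rewrite cat_rcons perm_cat_cons.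
by rewrite -(permPr (perm_cat_cons _ _ _)) perm_cat2l IH.
Qed.

Lemma all_sorted_rcons_nth T r x : r < size T ->
  all (sorted ltn) (rcons_nth T r x) =
  all (sorted ltn) T && all (fun y => y < x) (nth [::] T r).
Proof.
move=> lt_r; apply/idP/andP => [sorted_T'|[sorted_T lt_x]].
  have := allP sorted_T' _ (mem_nth [::] (_ : r < size (rcons_nth T r x))).
  rewrite size_rcons_nth // nth_rcons_nth eqxx sorted_rcons_ltn => /(_ lt_r)/andP[row_r ->].
  split=> //; apply/(all_nthP [::]) => k lt_k.
  have := all_nthP [::] sorted_T' k; rewrite size_rcons_nth // nth_rcons_nth.
  by case: eqP => [->|_]; [rewrite row_r | apply].
apply: all_set_nth => //; rewrite sorted_rcons_ltn lt_x andbT.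
exact: (allP sorted_T) _ (mem_nth [::] lt_r).
Qed.

Lemma mem_boxes T p :
  (p \in boxes T) = (p.1 < size T) && (p.2 < size (nth [::] T p.1)).
Proof.
case: p => r c /=; apply/allpairsPdep/andP => [[r' [c' []]]|[lt_r lt_c]].
  by rewrite !mem_iota => /andP[_ ?] /andP[_ ?] [-> ->].
by exists r, c; rewrite !mem_iota.
Qed.

Lemma uniq_boxes T : uniq (boxes T).
Proof.
apply: allpairs_uniq_dep => [||[r c] [r' c'] _ _ /= [-> ->]] //; first exact: iota_uniq.
by move=> r _; apply: iota_uniq.
Qed.

Lemma mem_entry T p : p \in boxes T -> entry T p.1 p.2 \in flatten T.
Proof.
case: p => r c; rewrite mem_boxes /= => /andP[lt_r lt_c].
by apply/flattenP; exists (nth [::] T r); rewrite ?mem_nth.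
Qed.

Lemma DsizeE T j : Dsize T j =
  \sum_(p <- boxes T) \sum_(q <- boxes T) ((entry T q.1 q.2 == j) && dim_pair T p q : nat).
Proof. by rewrite /Dsize -sum_nat_of_bool big_allpairs. Qed.

Section AddMaxEntry.

Variables (T : seq (seq nat)) (r x : nat).
Hypothesis lt_r : r < size T.
Hypothesis lt_x : {in flatten T, forall y, y < x}.

Let T' := rcons_nth T r x.
Let c0 := size (nth [::] T r).

Lemma perm_boxes_rcons_nth : perm_eq (boxes T') ((r, c0) :: boxes T).
Proof.
apply: uniq_perm; rewrite /= ?uniq_boxes ?mem_boxes /= ?ltnn ?andbF //.
case=> r1 c1; rewrite in_cons !mem_boxes /= size_rcons_nth // nth_rcons_nth xpair_eqE.
by case: eqP => [->|] //=; rewrite lt_r size_rcons ltnS leq_eqVlt.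
Qed.

Lemma entry_rcons_nth p : p \in boxes T -> entry T' p.1 p.2 = entry T p.1 p.2.
Proof.
case: p => r1 c1; rewrite mem_boxes /entry nth_rcons_nth /= => /andP[_].
by case: eqP => // ->; rewrite nth_rcons => ->.
Qed.

Lemma entry_rcons_nth_new : entry T' r c0 = x.
Proof. by rewrite /entry nth_rcons_nth eqxx nth_rcons ltnn eqxx. Qed.

Lemma entry_rcons_nth_le q : q \in boxes T' -> entry T' q.1 q.2 <= x.
Proof.
rewrite (perm_mem perm_boxes_rcons_nth) in_cons => /orP[/eqP->|T_q].
  by rewrite entry_rcons_nth_new.
by rewrite entry_rcons_nth // ltnW // lt_x // mem_entry.
Qed.

(* The new box holds the largest entry, so it is never the first box of a dimension pair. *)
Lemma Dsize_rcons_nthE j : Dsize T' j =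
  \sum_(p <- boxes T) \sum_(q <- boxes T') ((entry T' q.1 q.2 == j) && dim_pair T' p q : nat).
Proof.
rewrite DsizeE (perm_big _ perm_boxes_rcons_nth) big_cons big1_seq ?add0n // => -[r2 c2] T'_q.
by rewrite /dim_pair /= entry_rcons_nth_new ltnNge (entry_rcons_nth_le T'_q) andbF.
Qed.

Lemma Dsize_rcons_nth_lt j : j < x -> Dsize T' j = Dsize T j.
Proof.
move=> lt_jx; rewrite Dsize_rcons_nthE DsizeE; apply: eq_big_seq => -[r1 c1] T_p.
rewrite (perm_big _ perm_boxes_rcons_nth) big_cons /= entry_rcons_nth_new gtn_eqF //.
apply: eq_big_seq => -[r2 c2] T_q; rewrite /dim_pair.
rewrite (entry_rcons_nth T_p) (entry_rcons_nth T_q) /=.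
case: eqP => //= ->; congr [&& _, _ & _].
move: T_p; rewrite mem_boxes /entry nth_rcons_nth /= => /andP[_ lt_c1].
case: eqP lt_c1 => // -> lt_c1; rewrite size_rcons nth_rcons ltnS.
by case: (ltngtP c1.+1 (size (nth [::] T r))) lt_c1 => //= _ _; rewrite ltnW.
Qed.

Lemma dim_pair_rcons_nth_new r1 c1 : (r1, c1) \in boxes T ->
  dim_pair T' (r1, c1) (r, c0) =
  (c1.+1 == size (nth [::] T r1)) && ((c0 == c1) && (r1 < r) || (c0 < c1)).
Proof.
move=> T_p; have := T_p; rewrite mem_boxes /= => /andP[lt_r1 lt_c1].
rewrite /dim_pair (entry_rcons_nth T_p) entry_rcons_nth_new lt_x ?(mem_entry T_p) //=.
case: (eqVneq r1 r) => [eq_r|ne_r].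
  move: lt_c1; rewrite eq_r -/c0 => lt_c1.
  by rewrite ltnn andbF /= ltnNge (ltnW lt_c1) !andbF.
rewrite /entry nth_rcons_nth (negbTE ne_r) andbC.
case: (ltngtP c1.+1 (size (nth [::] T r1))) lt_c1 => //= lt_c1' _.
have T_q : (r1, c1.+1) \in boxes T by rewrite mem_boxes /= lt_r1.
by rewrite leqNgt (lt_x (mem_entry T_q)).
Qed.

Lemma Dsize_rcons_nth_max : Dsize T' x = dim_rank (shape T') r.
Proof.
rewrite Dsize_rcons_nthE.
have only_new p : p \in boxes T ->
    \sum_(q <- boxes T') ((entry T' q.1 q.2 == x) && dim_pair T' p q : nat) =
    dim_pair T' p (r, c0).
  move=> T_p; rewrite (perm_big _ perm_boxes_rcons_nth) big_cons /= entry_rcons_nth_new eqxx.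
  rewrite big1_seq ?addn0 // => -[r2 c2] T_q /=.
  by rewrite (entry_rcons_nth T_q) ltn_eqF // lt_x // (mem_entry T_q).
rewrite (eq_big_seq _ only_new) big_allpairs_dep /dim_rank /nz_rows count_filter.
rewrite -sum_nat_of_bool size_map size_rcons_nth //.
apply: eq_big_seq => r1; rewrite mem_iota add0n => /andP[_ lt_r1].
rewrite (eq_big_seq (fun c1 => (c1.+1 == size (nth [::] T r1)) &&
                               ((c0 == c1) && (r1 < r) || (c0 < c1)) : nat)); last first.
  move=> c1; rewrite mem_iota => /andP[_ lt_c1].
  by rewrite dim_pair_rcons_nth_new // mem_boxes /= lt_r1.
rewrite sum_iota_last /dim_le /far_col /= !nth_shape !nth_rcons_nth eqxx size_rcons /=.
case: (eqVneq r1 r) => [->|ne_r] /=; rewrite -/c0.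
  by case: c0 => // c; rewrite ltnn andbF /= ltnNge leqnSn.
by congr nat_of_bool; lia.
Qed.

End AddMaxEntry.

Lemma size_filling s T : row_strict_filling s T -> size T = size s.
Proof. by case/and3P => /eqP <- _ _; rewrite size_map. Qed.

Lemma mem_flatten_filling s T y :
  row_strict_filling s T -> (y \in flatten T) = (0 < y <= sumn s).
Proof. by case/and3P => _ /perm_mem -> _; rewrite mem_iota add1n ltnS. Qed.

Lemma row_strict_filling_rcons_nth s T r : r < size T ->
  row_strict_filling s (rcons_nth T r (sumn s)) =
  (0 < nth 0 s r) && row_strict_filling (decr_nth s r) T.
Proof.
move=> lt_r; rewrite /row_strict_filling shape_rcons_nth //.
case: (posnP (nth 0 s r)) => [s_r0|pos_r] /=.
  by case: eqP => // eq_s; move: s_r0; rewrite -eq_s nth_incr_nth eqxx.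
have [m sum_s] := sumn_nth_pos pos_r.
have -> : (incr_nth (shape T) r == s) = (shape T == decr_nth s r).
  by apply/eqP/eqP => [<-|->]; rewrite ?incr_nthK ?decr_nthK ?size_map.
rewrite sumn_decr_nth // sum_s (permPl (perm_flatten_rcons_nth _ lt_r)).
rewrite (permPr (perm_iotaS m)) perm_cons all_sorted_rcons_nth //.
case flat_T: (perm_eq _ _); rewrite ?andbF //= andbA.
apply: andb_idr => _; apply/allP => y y_r.
have : y \in flatten T by apply/flattenP; exists (nth [::] T r); rewrite ?mem_nth.
by rewrite (perm_mem flat_T) mem_iota add1n => /andP[].
Qed.

Lemma filling_rcons_nth_max s T : row_strict_filling s T -> 0 < sumn s ->
  exists r T', r < size T' /\ T = rcons_nth T' r (sumn s).
Proof.
move=> fill_T pos_s; have /and3P[_ _ sorted_T] := fill_T.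
have : sumn s \in flatten T by rewrite (mem_flatten_filling _ fill_T) pos_s leqnn.
case/flattenP => row T_row s_row.
have [r lt_r E] : exists2 r, r < size T & nth [::] T r = row.
  by exists (index row T); rewrite ?index_mem ?nth_index.
case/lastP: row T_row s_row E => [//|row' y] T_row s_row E.
have y_max : y = sumn s.
  have y_T : y \in flatten T.
    by apply/flattenP; exists (rcons row' y); rewrite ?mem_rcons ?mem_head.
  have := mem_flatten_filling y fill_T; rewrite y_T => /esym/andP[_ le_y].
  move: s_row; rewrite mem_rcons in_cons => /predU1P[-> //|s_row'].
  move: (allP sorted_T _ T_row); rewrite sorted_rcons_ltn => /andP[_ /allP/(_ _ s_row')].
  lia.
exists r, (set_nth [::] T r row'); split; first by rewrite size_set_nth leq_max ltnSn.
by rewrite /rcons_nth set_set_nth eqxx nth_set_nth /= eqxx -y_max -E set_nth_id.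
Qed.

Lemma Phi_rcons_nth s r T : 0 < nth 0 s r -> row_strict_filling (decr_nth s r) T ->
  Phi (rcons_nth T r (sumn s)) =
  rcons (Phi T) (if (sumn s).-1 == 0 then 0 else dim_rank s r).
Proof.
move=> pos_r fill_T; have /and3P[/eqP sh _ _] := fill_T.
have lt_r : r < size T by rewrite (size_filling fill_T) size_decr_nth // nth_pos_size.
have sh' : shape (rcons_nth T r (sumn s)) = s by rewrite shape_rcons_nth // sh decr_nthK.
have [m sum_s] := sumn_nth_pos pos_r.
have lt_T : {in flatten T, forall y, y < m.+1}.
  by move=> y; rewrite (mem_flatten_filling _ fill_T) sumn_decr_nth // sum_s ltnS => /andP[].
rewrite /Phi sh' sh sumn_decr_nth // sum_s /= mkseqS; congr rcons.
  apply/eq_in_map => i; rewrite mem_iota add0n => /andP[_ lt_im] /=.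
  by case: eqP => // _; rewrite Dsize_rcons_nth_lt.
by case: eqP => // _; rewrite Dsize_rcons_nth_max // -sum_s sh'.
Qed.

Lemma A_set0 s e : sumn s = 0 -> A_set s e <-> e = [::].
Proof.
move=> sum0; split => [[T [/and3P[/eqP sh _ _] <-]]|->]; first by rewrite /Phi sh sum0.
set T := nseq (size s) ([::] : seq nat).
have sh : shape T = s.
  by rewrite /T {2}(natnseq0P _ (introT eqP sum0)); elim: (size s) => //= k ->.
exists T; rewrite /Phi /row_strict_filling sh sum0 eqxx all_nseq orbT.
by split=> //; rewrite /T; elim: (size s).
Qed.

Lemma A_setS s m e : sumn s = m.+1 ->
  A_set s e <-> exists2 r, 0 < nth 0 s r &
    exists2 e', A_set (decr_nth s r) e' & e = rcons e' (if m == 0 then 0 else dim_rank s r).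
Proof.
move=> sum_s; split=> [[T [fill_T <-]]|[r pos_r [e' [T' [fill_T' <-]] ->]]].
  have pos_s : 0 < sumn s by rewrite sum_s.
  have [r [T' [lt_r eq_T]]] := filling_rcons_nth_max fill_T pos_s.
  move: fill_T; rewrite eq_T row_strict_filling_rcons_nth // => /andP[pos_r fill_T'].
  exists r => //; exists (Phi T'); first by exists T'.
  by rewrite Phi_rcons_nth // sum_s.
have lt_r : r < size T' by rewrite (size_filling fill_T') size_decr_nth // nth_pos_size.
exists (rcons_nth T' r (sumn s)).
by rewrite row_strict_filling_rcons_nth // pos_r Phi_rcons_nth // sum_s.
Qed.

(** * Exchanging two adjacent rows *)

Definition swap_idx i k := if k == i then i.+1 else if k == i.+1 then i else k.

Definition swap_nth (s : seq nat) i := mkseq (fun k => nth 0 s (swap_idx i k)) (size s).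

Lemma swap_idxK i : involutive (swap_idx i).
Proof. by move=> k; rewrite /swap_idx; do ![case: eqP => //=]; lia. Qed.

Lemma swap_idx_inj i : injective (swap_idx i).
Proof. exact: can_inj (swap_idxK i). Qed.

Lemma swap_idx_lt i n k : i.+1 < n -> (swap_idx i k < n) = (k < n).
Proof. by rewrite /swap_idx; do ![case: eqP => //=]; lia. Qed.

Lemma swap_idx_leq i k r : ~~ ((k == i) && (r == i.+1) || (k == i.+1) && (r == i)) ->
  (swap_idx i k <= swap_idx i r) = (k <= r).
Proof. by rewrite /swap_idx; do ![case: eqP => //=]; lia. Qed.

Lemma perm_swap_idx_iota i n : i.+1 < n -> perm_eq (map (swap_idx i) (iota 0 n)) (iota 0 n).
Proof.
move=> lt_i; apply: uniq_perm; rewrite ?map_inj_uniq ?iota_uniq //; first exact: swap_idx_inj.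
move=> k; rewrite -[k in LHS](swap_idxK i) (mem_map (@swap_idx_inj i)) !mem_iota.
by rewrite !add0n swap_idx_lt.
Qed.

Lemma count_swap_idx (P : pred nat) i n : i.+1 < n ->
  count (P \o swap_idx i) (iota 0 n) = count P (iota 0 n).
Proof. by move=> lt_i; rewrite -count_map; apply/permP/perm_swap_idx_iota. Qed.

Lemma size_swap_nth s i : size (swap_nth s i) = size s.
Proof. exact: size_mkseq. Qed.

Lemma nth_swap_nth s i k : i.+1 < size s -> nth 0 (swap_nth s i) k = nth 0 s (swap_idx i k).
Proof.
move=> lt_i; case: (ltnP k (size s)) => [lt_k|le_k]; first by rewrite nth_mkseq.
by rewrite !nth_default ?size_swap_nth // leqNgt swap_idx_lt // -leqNgt.
Qed.

Lemma swap_nthK i s : i.+1 < size s -> swap_nth (swap_nth s i) i = s.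
Proof.
move=> lt_i; apply: (@eq_from_nth _ 0) => [|k _]; rewrite ?size_swap_nth //.
by rewrite !nth_swap_nth ?size_swap_nth // swap_idxK.
Qed.

Lemma swap_nth_id s i : nth 0 s i = nth 0 s i.+1 -> swap_nth s i = s.
Proof.
move=> eq_i; apply: (@eq_from_nth _ 0) => [|k]; rewrite size_swap_nth // => lt_k.
rewrite nth_mkseq // /swap_idx; case: (eqVneq k i) => [->|_]; first by rewrite eq_i.
by case: (eqVneq k i.+1) => [->|].
Qed.

Lemma sumn_swap_nth s i : i.+1 < size s -> sumn (swap_nth s i) = sumn s.
Proof.
move=> lt_i; apply: perm_sumn.
have -> : swap_nth s i = map (nth 0 s) (map (swap_idx i) (iota 0 (size s))).
  by rewrite -map_comp.
rewrite -[X in perm_eq _ X](mkseq_nth 0 s); exact/perm_map/perm_swap_idx_iota.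
Qed.

Lemma decr_nth_swap_nth s i r : i.+1 < size s -> r < size s ->
  decr_nth (swap_nth s i) (swap_idx i r) = swap_nth (decr_nth s r) i.
Proof.
move=> lt_i lt_r; apply: (@eq_from_nth _ 0) => [|k _].
  by rewrite size_decr_nth ?size_swap_nth ?size_decr_nth // swap_idx_lt.
rewrite nth_decr_nth !nth_swap_nth ?size_decr_nth // nth_decr_nth.
by rewrite -(inj_eq (@swap_idx_inj i)) swap_idxK.
Qed.

(* The tie-break of the dimension order between two rows of equal length is the
   only place where their order matters; adjacent rows of different lengths never tie. *)
Lemma dim_rank_swap_nth s i r : i.+1 < size s -> nth 0 s i != nth 0 s i.+1 ->
  0 < nth 0 s r -> dim_rank (swap_nth s i) (swap_idx i r) = dim_rank s r.
Proof.
move=> lt_i ne_i pos_r.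
rewrite /dim_rank /nz_rows !count_filter size_swap_nth -(count_swap_idx _ lt_i).
apply: eq_count => k /=; rewrite nth_swap_nth // (inj_eq (@swap_idx_inj i)).
rewrite /dim_le /far_col !nth_swap_nth // !swap_idxK.
case: (eqVneq k r) => //= ne_kr; case: (posnP (nth 0 s k)) => [->|pos_k]; rewrite ?andbF //.
case: (eqVneq (nth 0 s k) (nth 0 s r)) => [eq_kr|ne_kr']; last first.
  have -> // : ((nth 0 s k).-1 == (nth 0 s r).-1) = false by apply/eqP; lia.
by rewrite swap_idx_leq //; apply: contra ne_i => /orP[] /andP[/eqP<- /eqP<-]; rewrite eq_kr.
Qed.

Lemma A_set_swap_nth s i e : i.+1 < size s -> A_set s e -> A_set (swap_nth s i) e.
Proof.
have [m] := ubnP (sumn s); elim: m s e => // m IH s e; rewrite ltnS => le_sm lt_i.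
have [eq_i|ne_i] := eqVneq (nth 0 s i) (nth 0 s i.+1); first by rewrite swap_nth_id.
have [m' sum_s] : exists m', sumn s = m'.+1.
  case: (posnP (nth 0 s i)) => [s_i0|pos_i]; last exact: sumn_nth_pos pos_i.
  by apply: (@sumn_nth_pos _ i.+1); lia.
rewrite (A_setS _ sum_s) (A_setS _ (etrans (sumn_swap_nth lt_i) sum_s)).
case=> r pos_r [e' A_e' ->]; have lt_r := nth_pos_size pos_r.
exists (swap_idx i r); first by rewrite nth_swap_nth // swap_idxK.
exists e'; last by rewrite dim_rank_swap_nth.
rewrite decr_nth_swap_nth //; apply: IH; rewrite ?size_decr_nth //.
by rewrite sumn_decr_nth // sum_s -ltnS -sum_s.
Qed.

Lemma A_set_swap_nthE s i e : i.+1 < size s -> A_set (swap_nth s i) e <-> A_set s e.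
Proof.
move=> lt_i; split; last exact: A_set_swap_nth.
by rewrite -{2}(swap_nthK lt_i); apply: A_set_swap_nth; rewrite size_swap_nth.
Qed.

(* When rows r and r + 1 have equal lengths, shortening row r amounts to shortening
   row r + 1 and then exchanging the two rows. *)
Lemma A_set_decr_nth_block s r d e : r + d < size s ->
  (forall k, r <= k <= r + d -> nth 0 s k = nth 0 s r) ->
  A_set (decr_nth s r) e <-> A_set (decr_nth s (r + d)) e.
Proof.
elim: d r => [|d IH] r lt_rd eq_block; first by rewrite addn0.
have lt_r1 : r.+1 < size s by apply: leq_ltn_trans lt_rd; rewrite addnS ltnS leq_addr.
have eq_r1 : nth 0 s r = nth 0 s r.+1 by rewrite eq_block // leqnSn addnS ltnS leq_addr.
have <- : swap_nth (decr_nth s r.+1) r = decr_nth s r.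
  rewrite -decr_nth_swap_nth ?size_decr_nth // ?(ltnW lt_r1) // swap_nth_id //.
  by rewrite /swap_idx eqSS (gtn_eqF (ltnSn r)) eqxx.
rewrite A_set_swap_nthE ?size_decr_nth // addnS -addSn.
apply: IH; first by rewrite addSn -addnS.
by move=> k /andP[lt_rk le_k]; rewrite -eq_r1 eq_block // ltnW //= addnS -addSn.
Qed.

(** * Removing a box at the bottom of a column *)

Lemma col_height_size nu c : col_height nu c <= size nu.
Proof. exact: count_size. Qed.

Lemma col_heightP (nu : seq nat) c k : sorted geq nu ->
  (k < col_height nu c) = (c < nth 0 nu k).
Proof.
rewrite /col_height; elim: nu k => [|a nu IH] k nu_geq; first by rewrite nth_nil.
have all_le : all (fun l => l <= a) nu by apply: (order_path_min (rev_trans leq_trans) nu_geq).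
case: (ltnP c a) => [lt_ca|le_ac] /=.
  by rewrite lt_ca add1n; case: k => [|k] //=; rewrite ltnS IH // (path_sorted nu_geq).
have -> : count (fun l => c < l) nu = 0.
  apply/eqP; rewrite -leqn0 leqNgt -has_count; apply/hasPn => l /(allP all_le) le_la.
  by rewrite -leqNgt (leq_trans le_la).
have /negbTE nlt_ca : ~~ (c < a) by rewrite -leqNgt.
rewrite nlt_ca; case: k => [|k] //=.
case: (ltnP k (size nu)) => [lt_k|le_k]; last by rewrite nth_default.
by apply/esym/negbTE; rewrite -leqNgt (leq_trans _ le_ac) // (allP all_le) // mem_nth.
Qed.

Section RemovePush.

Variable nu : seq nat.
Hypothesis nu_geq : sorted geq nu.
Variable r : nat.
Hypothesis pos_r : 0 < nth 0 nu r.

Let c := far_col nu r.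
Let h := col_height nu c.

Lemma lt_col_height_far_col : r < h.
Proof. by rewrite col_heightP // /c /far_col prednK. Qed.

Lemma remove_push_decr_nth : remove_push nu r = decr_nth nu h.-1.
Proof.
have lt_rh := lt_col_height_far_col; have le_h := col_height_size nu c.
apply: (@eq_from_nth _ 0) => [|k]; rewrite size_mkseq; first by rewrite size_decr_nth //; lia.
move=> lt_k; rewrite nth_mkseq // nth_decr_nth.
have le_kH : nth 0 nu k <= head 0 nu by rewrite -nth0 sorted_geq_nth.
have lt_cH : c < head 0 nu.
  by rewrite -nth0 (leq_trans _ (sorted_geq_nth nu_geq (leq0n r))) // /c /far_col prednK.
rewrite (eq_in_count (a2 := fun c' => if c' == c then c < nth 0 nu k.+1 else c' < nth 0 nu k));
  last by move=> c' _ /=; case: eqP => [->|_]; rewrite ?subn1 ?subn0 ?ltn_predRL col_heightP.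
have := count_iota_update (fun c' => c' < nth 0 nu k) (c < nth 0 nu k.+1) lt_cH.
by rewrite count_iota_lt // -!col_heightP // -/h; lia.
Qed.

Lemma sorted_remove_push : sorted geq (remove_push nu r).
Proof.
have lt_rh := lt_col_height_far_col; rewrite remove_push_decr_nth.
apply/(sortedP 0) => k _; rewrite !nth_decr_nth.
have := sorted_geq_nth nu_geq (leqnSn k).
have := col_heightP c k nu_geq; have := col_heightP c k.+1 nu_geq; rewrite -/h; lia.
Qed.

Lemma sumn_remove_push : sumn (remove_push nu r) = (sumn nu).-1.
Proof.
have lt_rh := lt_col_height_far_col; rewrite remove_push_decr_nth sumn_decr_nth //.
by rewrite (leq_ltn_trans (leq0n c)) // -col_heightP // -/h; lia.
Qed.

(* The rows r, ..., h - 1 all end in column c, so they have equal lengths. *)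
Lemma A_set_remove_push e : A_set (remove_push nu r) e <-> A_set (decr_nth nu r) e.
Proof.
have lt_rh := lt_col_height_far_col; have le_h := col_height_size nu c.
rewrite remove_push_decr_nth -(subnKC (_ : r <= h.-1)); last by lia.
symmetry; apply: A_set_decr_nth_block; rewrite subnKC; try lia.
move=> k /andP[le_rk le_kh]; have := sorted_geq_nth nu_geq le_rk.
have := col_heightP c k nu_geq; rewrite -/h /c /far_col; lia.
Qed.

End RemovePush.

(** * The dimension order and the Garsia-Procesi recursion *)

Lemma dim_le_trans s : transitive (dim_le s).
Proof. by move=> y x z; rewrite /dim_le; lia. Qed.

Lemma dim_le_total s : total (dim_le s).
Proof. by move=> x y; rewrite /dim_le; lia. Qed.

Lemma dim_le_anti s : antisymmetric (dim_le s).
Proof. by move=> x y; rewrite /dim_le; lia. Qed.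

Lemma count_le_nth_sorted (T : eqType) (le : rel T) x0 (l : seq T) j :
  transitive le -> antisymmetric le -> uniq l -> sorted le l -> j < size l ->
  count (fun k => (k != nth x0 l j) && le k (nth x0 l j)) l = j.
Proof.
move=> le_tr le_anti l_uniq l_sorted lt_j; set x := nth x0 l j.
have def_l : l = take j l ++ x :: drop j.+1 l by rewrite -drop_nth // cat_take_drop.
move: l_uniq (l_sorted); rewrite (sorted_pairwise le_tr) def_l pairwise_cat cat_uniq /=.
case/and3P=> _ /norP[x_take _] /andP[x_drop _] /and3P[le_take _ /andP[le_drop _]].
rewrite count_cat /= eqxx add0n -[RHS](size_takel (ltnW lt_j)) -[RHS]addn0.
congr (_ + _).
  apply/eqP; rewrite -all_count; apply/allP => k k_take.
  rewrite (allrelP le_take k x k_take (mem_head _ _)) andbT.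
  by apply: contraNneq x_take => <-.
apply/eqP; rewrite -leqn0 leqNgt -has_count; apply/hasPn => k k_drop /=.
apply/negP => /andP[ne_kx le_kx]; move: ne_kx.
by rewrite (le_anti k x) ?eqxx // le_kx (allP le_drop).
Qed.

Lemma mem_nz_rows nu r : (r \in nz_rows nu) = (0 < nth 0 nu r).
Proof.
rewrite mem_filter mem_iota add0n andbC; case: ltnP => //= le_r.
by rewrite nth_default.
Qed.

Lemma dim_order_nth nu j : j < size (nz_rows nu) ->
  0 < nth 0 nu (nth 0 (dim_order nu) j) /\ dim_rank nu (nth 0 (dim_order nu) j) = j.
Proof.
move=> lt_j; have lt_j' : j < size (dim_order nu) by rewrite size_sort.
split; first by rewrite -mem_nz_rows -(mem_sort (dim_le nu)) mem_nth.
rewrite /dim_rank -(count_sort (dim_le nu)).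
apply: count_le_nth_sorted => //; [exact: dim_le_trans | exact: dim_le_anti | | ].
  by rewrite sort_uniq filter_uniq // iota_uniq.
exact/sort_sorted/dim_le_total.
Qed.

Lemma dim_order_index nu r : 0 < nth 0 nu r ->
  exists2 j, j < size (nz_rows nu) & nth 0 (dim_order nu) j = r.
Proof.
move=> pos_r; have r_ord : r \in dim_order nu by rewrite mem_sort mem_nz_rows.
by exists (index r (dim_order nu)); rewrite ?nth_index // -(size_sort (dim_le nu)) index_mem.
Qed.

Lemma nth_pos_of_sumn (s : seq nat) : 0 < sumn s -> exists r, 0 < nth 0 s r.
Proof.
elim: s => [|a s IH] //=; case: (posnP a) => [->|pos_a] pos_s; last by exists 0.
by have [r] := IH pos_s; exists r.+1.
Qed.

Lemma mem_gp_pathsS k nu x :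
  reflect (exists2 j, j < size (nz_rows nu) &
             exists2 y, y \in gp_paths k (gp_child nu j) & x = rcons y j)
          (x \in gp_paths k.+1 nu).
Proof.
apply: (iffP flattenP) => [[_ /mapP[j j_iota ->] /mapP[y y_k ->]]|[j lt_j [y y_k ->]]].
  by exists j; [rewrite mem_iota in j_iota | exists y].
exists [seq rcons y j | y <- gp_paths k (gp_child nu j)]; last exact: map_f.
by apply/mapP; exists j; rewrite ?mem_iota.
Qed.

Lemma A_set_gp_paths k nu e : sorted geq nu -> sumn nu = k.+1 ->
  A_set nu e <-> e \in [seq 0 :: x | x <- gp_paths k nu].
Proof.
elim: k nu e => [|k IH] nu e nu_geq sum_nu; rewrite (A_setS _ sum_nu).
  rewrite mem_seq1; split => [[r pos_r [e' ]]|/eqP ->].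
    by rewrite A_set0 ?sumn_decr_nth ?sum_nu // => -> ->.
  have [r pos_r] : exists r, 0 < nth 0 nu r by apply: nth_pos_of_sumn; rewrite sum_nu.
  by exists r => //; exists [::]; rewrite ?A_set0 ?sumn_decr_nth ?sum_nu.
have A_child j e' : j < size (nz_rows nu) ->
    A_set (decr_nth nu (nth 0 (dim_order nu) j)) e' <->
    e' \in [seq 0 :: x | x <- gp_paths k (gp_child nu j)].
  move=> lt_j; have [pos_r _] := dim_order_nth lt_j.
  rewrite -A_set_remove_push //; apply: IH; first exact: sorted_remove_push.
  by rewrite sumn_remove_push // sum_nu.
split=> [[r pos_r [e' A_e' ->]]|/mapP[_ /mem_gp_pathsS[j lt_j [x x_k ->]] ->]].
  have [j lt_j eq_r] := dim_order_index pos_r; have [_ rank_j] := dim_order_nth lt_j.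
  move: A_e'; rewrite -eq_r A_child // rank_j => /mapP[x x_k ->].
  by apply/mapP; exists (rcons x j) => //; apply/mem_gp_pathsS; exists j => //; exists x.
have [pos_r rank_j] := dim_order_nth lt_j.
exists (nth 0 (dim_order nu) j) => //; exists (0 :: x); last by rewrite rank_j.
by rewrite A_child // map_f.
Qed.

Theorem mainTheorem8 (n : nat) (mu : seq nat) :
  0 < n -> is_partition n mu ->
  forall e : seq nat, A_set mu e <-> e \in B_set mu.
Proof.
move=> pos_n /and3P[mu_geq _ /eqP sum_mu] e.
by apply: A_set_gp_paths; rewrite // sum_mu prednK.
Qed.
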